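(* The function $\kappa\mapsto\Gamma(\kappa,0)$ does not vanish on $(0,\infty)\setminus I_*$, where $I_*:=(0.380337,\,0.380338)$.
   Context: For each $\kappa>0$, $\Gamma(\kappa,0):=\lim_{\ell\to0}\Gamma_\ell$ is the value at $\ell=0$ of the analytic extension of $\ell\mapsto\Gamma_\ell$, where $\Gamma_\ell$ (small $\ell\ne0$) is defined as follows. Set $T:=2\pi/\kappa$, $\mu_0:=\kappa/\tanh(\kappa)$, $H^s_{\rm per}:=H^s(\mathbb R/T\mathbb Z)$. For a sufficiently regular $\eta$ with $1+\eta>0$, $G[1+\eta]\psi:=(\partial_z\phi-\nabla\eta\cdot\nabla\phi)|_{z=1+\eta}$, $\nabla=(\partial_x,\partial_y)$, where $\phi$ is the bounded solution of $\Delta_{x,y,z}\phi=0$ in $\{0<z<1+\eta(x,y)\}$, $\partial_z\phi(\cdot,\cdot,0)=0$, $\phi|_{z=1+\eta}=\psi$. Let $\varepsilon\mapsto(\underline\eta_\varepsilon,\underline\psi_\varepsilon,\underline\mu_\varepsilon)$ be the analytic family of small-amplitude $T$-periodic Stokes waves: the unique solution of $\underline\eta'+G[1+\underline\eta]\underline\psi=0$, $\underline\psi'-\underline\mu\,\underline\eta=\frac12(\underline\psi')^2-\frac12\frac{(G[1+\underline\eta]\underline\psi+\underline\eta'\underline\psi')^2}{1+(\underline\eta')^2}$ with $\|(\underline\eta,\underline\psi)-\varepsilon(\sinh(\kappa)\cos(\kappa\cdot),\cosh(\kappa)\sin(\kappa\cdot))\|_{H^{s_0}_{\rm per}}+|\underline\mu-\mu_0|\le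 K_0\varepsilon^2$. Set $\underline B_\varepsilon:=\frac{\underline\psi_\varepsilon'-1}{1+(\underline\eta_\varepsilon')^2}\underline\eta_\varepsilon'$, $\underline V_\varepsilon:=\underline\psi'_\varepsilon-\underline B_\varepsilon\underline\eta_\varepsilon'$, $\underline a_\varepsilon:=\underline\mu_\varepsilon-\mu_0-(1-\underline V_\varepsilon)\underline B_\varepsilon'$, $G_{\ell,\xi}[1+\underline\eta_\varepsilon]\psi(x):=e^{-i\xi x-i\ell y}G[1+\underline\eta_\varepsilon]\big((x',y')\mapsto e^{i\xi x'+i\ell y'}\psi(x')\big)(x,y)$ and $L^\varepsilon_{\ell,\xi}:=\begin{pmatrix}(\partial_x+i\xi)((1-\underline V_\varepsilon)\,\cdot\,) & G_{\ell,\xi}[1+\underline\eta_\varepsilon]\\ -(\mu_0+\underline a_\varepsilon) & (1-\underline V_\varepsilon)(\partial_x+i\xi)\end{pmatrix}$ on $L^2_{\rm per}\times H^{1/2}_{\rm per}$. Let $F$ be the odd analytic function with $F(r)=\sqrt{r\tanh r}$ for $r\ge0$, $|n\kappa|_{\ell,\xi}:=\sqrt{(n\kappa+\xi)^2+\ell^2}$, $\lambda^\pm_{n,\ell,\xi}:=i(n\kappa+\xi\pm\sqrt{\mu_0}F(|n\kappa|_{\ell,\xi}))$, and $\xi_+$ the odd analytic function near $0$ with $\xi_+'(0)>0$ and $\lambda^-_{1,\ell,\xi_+(\ell)}=\lambda^+_{-1,\ell,\xi_+(\ell)}=:i\sigma_+(\ell)$. For small $\ell\ne0$ and $|(\varepsilon,\xi-\xi_+(\ell))|\le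 c_0'|\ell|$, $L^\varepsilon_{\ell,\xi}$ has exactly two eigenvalues in $B(i\sigma_+(\ell),c_0|\ell|)$ (for suitable $c_0,c_0'>0$); let $\Pi_{\ell,\xi}(\varepsilon)$ be the associated Riesz projector and $\mathcal U_{\ell,\xi}(\varepsilon)$ the solution of $\partial_\varepsilon\mathcal U_{\ell,\xi}=[\partial_\varepsilon\Pi_{\ell,\xi},\Pi_{\ell,\xi}]\mathcal U_{\ell,\xi}$, $\mathcal U_{\ell,\xi}(0)=I$. Set $\alpha_\pm(\ell,\xi):=F(|\mp\kappa|_{\ell,\xi})/\sqrt{\mu_0}$, $q_-^0(\ell,\xi,x):=e^{i\kappa x}(i\alpha_-(\ell,\xi),1)^T$, $q_+^0(\ell,\xi,x):=e^{-i\kappa x}(-i\alpha_+(\ell,\xi),1)^T$, $q_\pm^\varepsilon:=\mathcal U_{\ell,\xi}(\varepsilon)q_\pm^0$, $J:=\begin{pmatrix}0&-1\\1&0\end{pmatrix}$, $A^\varepsilon_{\ell,\xi}:=J^{-1}L^\varepsilon_{\ell,\xi}$, $\langle f,g\rangle:=\frac1T\int_0^T\overline{f(x)}\cdot g(x)\,dx$, $a(\ell,\xi,\varepsilon):=\langle q_+^\varepsilon,A^\varepsilon_{\ell,\xi}q_-^\varepsilon\rangle$, $\Gamma_\ell:=\frac12\partial_\varepsilon^2a(\ell,\xi_+(\ell),0)$. (Explicitly, with $s=\sinh\kappa$, $c=\cosh\kappa$, $\Gamma(\kappa,0)=\frac{\kappa^3}{8csD(\kappa)}\big(\kappa^3(64s^8+144s^6+144s^4+94s^2+9)-\kappa^2cs(24s^4+40s^2+27)+\kappa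 s^2(1+s^2)(48s^6+40s^4+2s^2+27)-cs^3(1+s^2)(40s^4+56s^2+9)\big)$ with $D(\kappa)=\kappa^3(8s^4+10s^2+1)-3\kappa^2cs+3\kappa s^2(1+s^2)(2s^2+1)-cs^3(1+s^2)$.) *)

From Stdlib Require Import Reals.
Open Scope R_scope.

Definition Dk (k : R) : R :=
  let s := sinh k in let c := cosh k in
  k^3 * (8*s^4 + 10*s^2 + 1) - 3*k^2*c*s
  + 3*k*s^2*(1+s^2)*(2*s^2+1) - c*s^3*(1+s^2).

Definition Gamma0 (k : R) : R :=
  let s := sinh k in let c := cosh k in
  k^3 / (8*c*s*Dk k) *
  ( k^3 * (64*s^8 + 144*s^6 + 144*s^4 + 94*s^2 + 9)
    - k^2*c*s*(24*s^4 + 40*s^2 + 27)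
    + k*s^2*(1+s^2)*(48*s^6 + 40*s^4 + 2*s^2 + 27)
    - c*s^3*(1+s^2)*(40*s^4 + 56*s^2 + 9) ).

(* Write Gamma(kappa,0) = kappa^3 N(kappa) / (8 cosh(kappa) sinh(kappa) D(kappa)), N being the
   bracket of the closed form. Expanding sinh and cosh into exponentials, D and N + 16 kappa^7
   become finite sums of terms c kappa^i e^(lam kappa), whose Taylor coefficients have closed
   forms and are all nonnegative, those of N + 16 kappa^7 vanishing below order 9. Hence D > 0,
   and h(kappa) := (N(kappa) + 16 kappa^7) / kappa^7 is nondecreasing on (0, oo), so that
   N(kappa) = kappa^7 (h(kappa) - 16) changes sign at most once. It is negative at the left end
   of I_* (certified enclosure of exp(-0.380337)) and positive at the right end (a Taylor
   partial sum already exceeds 16 kappa^7). *)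

From Coquelicot Require Import Coquelicot.
From Stdlib Require Import Reals Lra Lia List.
Import ListNotations.
Open Scope R_scope.

Lemma is_pseries_iff_is_series (a : nat -> R) (x l : R) :
  is_pseries a x l <-> is_series (fun n => a n * x ^ n) l.
Proof.
  assert (E : forall n, scal (pow_n x n) (a n) = a n * x ^ n).
  { intro n. change (pow_n x n * a n = a n * x ^ n). rewrite pow_n_pow. apply Rmult_comm. }
  unfold is_pseries; split; apply is_series_ext; intro n; [|symmetry]; apply E.
Qed.

Lemma is_series_le_compat (u v : nat -> R) (lu lv : R) :
  (forall n, u n <= v n) -> is_series u lu -> is_series v lv -> lu <= lv.
Proof.
  intros Huv Hu Hv.
  assert (H : Rbar_le lu lv).
  { apply (is_lim_seq_le (sum_n u) (sum_n v)); [|exact Hu|exact Hv].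
    intro n. apply sum_n_m_le, Huv. }
  exact H.
Qed.

Lemma sum_n_le_is_series (u : nat -> R) (l : R) (N : nat) :
  (forall n, 0 <= u n) -> is_series u l -> sum_n u N <= l.
Proof.
  intros Hu Hl.
  assert (Hmono : forall d, sum_n u N <= sum_n u (d + N)).
  { induction d as [|d IH]; [apply Rle_refl|].
    change (S d + N)%nat with (S (d + N)). rewrite sum_Sn.
    change (plus (sum_n u (d + N)) (u (S (d + N)))) with (sum_n u (d + N) + u (S (d + N))).
    specialize (Hu (S (d + N))). lra. }
  assert (H : Rbar_le (sum_n u N) l).
  { apply (is_lim_seq_le_loc (fun _ => sum_n u N) (sum_n u)); [|apply is_lim_seq_const|exact Hl].
    exists N. intros n Hn. replace n with (n - N + N)%nat by lia. apply Hmono. }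
  exact H.
Qed.

Lemma is_pseries_div_pow_le (a : nat -> R) (m : nat) (f : R -> R) (x y : R) :
  (forall n, 0 <= a n) -> (forall n, (n < m)%nat -> a n = 0) ->
  (forall z, is_pseries a z (f z)) -> 0 < x <= y -> f x / x ^ m <= f y / y ^ m.
Proof.
  intros Ha Hlow Hf [Hx Hxy].
  assert (Hdiv : forall z, is_series (fun n => a n * z ^ n / z ^ m) (f z / z ^ m)).
  { intro z. apply is_series_scal_r, is_pseries_iff_is_series, Hf. }
  apply (is_series_le_compat (fun n => a n * x ^ n / x ^ m) (fun n => a n * y ^ n / y ^ m));
    [|apply Hdiv|apply Hdiv].
  intro n. destruct (Nat.lt_ge_cases n m) as [Hn|Hn].
  - rewrite Hlow by exact Hn. unfold Rdiv. rewrite !Rmult_0_l. lra.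
  - replace n with (m + (n - m))%nat by lia. set (j := (n - m)%nat). rewrite !pow_add.
    assert (0 < x ^ m) by (apply pow_lt; lra).
    assert (0 < y ^ m) by (apply pow_lt; lra).
    replace (a (m + j)%nat * (x ^ m * x ^ j) / x ^ m) with (a (m + j)%nat * x ^ j) by (field; lra).
    replace (a (m + j)%nat * (y ^ m * y ^ j) / y ^ m) with (a (m + j)%nat * y ^ j) by (field; lra).
    apply Rmult_le_compat_l; [apply Ha|apply pow_incr; lra].
Qed.

(* Equal to [INR (fact n)], but [cbn] unfolds it symbolically instead of
   computing a unary natural number. *)
Fixpoint Rfact (n : nat) : R :=
  match n with 0%nat => 1 | S m => Rfact m * (INR m + 1) end.

Lemma INR_fact_Rfact (n : nat) : INR (Factorial.fact n) = Rfact n.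
Proof.
  induction n as [|n IH]; [reflexivity|].
  change (Factorial.fact (S n)) with (S n * Factorial.fact n)%nat.
  rewrite mult_INR, IH, S_INR. simpl. ring.
Qed.

Lemma Rfact_pos (n : nat) : 0 < Rfact n.
Proof. rewrite <- INR_fact_Rfact. apply lt_0_INR, Factorial.lt_O_fact. Qed.

Definition monexp_coef (i : nat) (lam : R) (n : nat) : R :=
  if (n <? i)%nat then 0 else lam ^ (n - i) / Rfact (n - i).

Lemma is_pseries_monexp (i : nat) (lam x : R) :
  is_pseries (monexp_coef i lam) x (x ^ i * exp (lam * x)).
Proof.
  assert (Hexp : is_pseries (fun n => lam ^ n / Rfact n) x (exp (lam * x))).
  { apply is_pseries_iff_is_series.
    pose proof (is_exp_Reals (lam * x)) as H. apply is_pseries_iff_is_series in H.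
    revert H. apply is_series_ext. intro n.
    change (/ INR (Factorial.fact n) * (lam * x) ^ n = lam ^ n / Rfact n * x ^ n).
    rewrite INR_fact_Rfact, Rpow_mult_distr. field. apply Rgt_not_eq, Rfact_pos. }
  apply (is_pseries_incr_n _ i) in Hexp.
  change (scal (pow_n x i) (exp (lam * x))) with (pow_n x i * exp (lam * x)) in Hexp.
  rewrite pow_n_pow in Hexp.
  revert Hexp. apply is_pseries_ext. intro n.
  rewrite PS_incr_n_simplify. unfold monexp_coef.
  destruct (Compare_dec.le_lt_dec i n) as [Hin|Hni].
  - rewrite (proj2 (Nat.ltb_ge n i) Hin). reflexivity.
  - rewrite (proj2 (Nat.ltb_lt n i) Hni). reflexivity.
Qed.

Inductive exp_term := ET (c : R) (i : nat) (lam : R).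

Definition expoly (l : list exp_term) (x : R) : R :=
  fold_right (fun '(ET c i lam) acc => c * (x ^ i * exp (lam * x)) + acc) 0 l.

Definition expoly_coef (l : list exp_term) (n : nat) : R :=
  fold_right (fun '(ET c i lam) acc => c * monexp_coef i lam n + acc) 0 l.

Lemma is_pseries_expoly (l : list exp_term) (x : R) :
  is_pseries (expoly_coef l) x (expoly l x).
Proof.
  induction l as [|[c i lam] l IH].
  - pose proof (is_pseries_scal 0 _ _ _ (Rmult_comm x 0) (is_pseries_monexp 0 0 x)) as H.
    change (scal 0 ?l) with (0 * l) in H. rewrite Rmult_0_l in H.
    revert H. apply is_pseries_ext. intro n. apply Rmult_0_l.
  - apply (is_pseries_plus _ _ _ _ _
             (is_pseries_scal c _ _ _ (Rmult_comm x c) (is_pseries_monexp i lam x)) IH).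
Qed.

Lemma exp_IZR_mul (z : Z) (x : R) : exp (IZR z * x) = powerRZ (exp x) z.
Proof. rewrite powerRZ_Rpower by apply exp_pos. unfold Rpower. rewrite ln_exp. reflexivity. Qed.

Ltac expand_expoly :=
  unfold expoly; cbn [fold_right]; rewrite ?exp_IZR_mul;
  cbv [powerRZ Pos.to_nat Pos.iter_op Nat.add].

Lemma pow_even_IZR_neg (q : positive) (p : nat) : IZR (Zneg q) ^ (2 * p) = IZR (Zpos q) ^ (2 * p).
Proof. rewrite !pow_mult. change (IZR (Zneg q)) with (- IZR (Zpos q)). f_equal. ring. Qed.

Ltac expand_coef :=
  unfold expoly_coef, monexp_coef; cbn [fold_right Nat.add Nat.ltb Nat.leb Nat.sub pow Rfact];
  rewrite ?S_INR, ?INR_0, ?pow_even_IZR_neg.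

Ltac field_Rfact p :=
  pose proof (Rfact_pos (2 * p)); pose proof (pos_INR (2 * p));
  field; repeat split; apply Rgt_not_eq; lra.

Lemma nonneg_of_parity (a : nat -> R) (m : nat) :
  (forall n, (n < m)%nat -> a n = 0) ->
  (forall p, 0 <= a (m + 2 * p)%nat) ->
  (forall p, a (S m + 2 * p)%nat = 0) ->
  forall n, 0 <= a n.
Proof.
  intros Hlow Hodd Heven n.
  destruct (Nat.lt_ge_cases n m) as [Hn|Hn]; [rewrite Hlow by exact Hn; lra|].
  destruct (Nat.Even_or_Odd (n - m)) as [[p Hp]|[p Hp]].
  - replace n with (m + 2 * p)%nat by lia. apply Hodd.
  - replace n with (S m + 2 * p)%nat by lia. rewrite Heven. lra.
Qed.

Lemma coef_nonneg_of_scaled (c t : R) (n : nat) : c * Rfact n = t -> 0 <= t -> 0 <= c.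
Proof.
  intros Hct Ht. apply (Rmult_le_reg_r (Rfact n)); [apply Rfact_pos|]. lra.
Qed.

Lemma exp_neg_alternating_bounds (x : R) (N : nat) : 0 <= x <= 1 ->
  sum_f_R0 (tg_alt (fun n => x ^ n / Rfact n)) (S (2 * N)) <= exp (- x)
  <= sum_f_R0 (tg_alt (fun n => x ^ n / Rfact n)) (2 * N).
Proof.
  intro Hx. apply alternated_series_ineq.
  - intro n. cbn [pow Rfact].
    pose proof (Rfact_pos n). pose proof (pos_INR n).
    assert (0 <= x ^ n / Rfact n) by (apply Rdiv_le_0_compat; [apply pow_le|]; lra).
    replace (x * x ^ n / (Rfact n * (INR n + 1))) with (x ^ n / Rfact n * (x / (INR n + 1)))
      by (field; lra).
    rewrite <- (Rmult_1_r (x ^ n / Rfact n)) at 2.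
    apply Rmult_le_compat_l; [lra|]. apply Rcomplements.Rle_div_l; lra.
  - intros eps Heps. destruct (cv_speed_pow_fact x eps Heps) as [M HM].
    exists M. intros n Hn. rewrite <- INR_fact_Rfact. apply HM, Hn.
  - apply is_lim_seq_Reals.
    pose proof (is_exp_Reals (- x)) as H. apply is_pseries_iff_is_series in H.
    apply (is_lim_seq_ext (sum_n (fun n => / INR (Factorial.fact n) * (- x) ^ n))); [|exact H].
    intro M. rewrite sum_n_Reals. apply sum_eq. intros i _.
    unfold tg_alt. rewrite <- INR_fact_Rfact.
    replace (- x) with (-1 * x) by ring. rewrite Rpow_mult_distr.
    field. apply INR_fact_neq_0.
Qed.

Definition Gamma0_num (k : R) : R :=
  let s := sinh k in let c := cosh k in
  k^3 * (64*s^8 + 144*s^6 + 144*s^4 + 94*s^2 + 9)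
  - k^2*c*s*(24*s^4 + 40*s^2 + 27)
  + k*s^2*(1+s^2)*(48*s^6 + 40*s^4 + 2*s^2 + 27)
  - c*s^3*(1+s^2)*(40*s^4 + 56*s^2 + 9).

Lemma Gamma0_factor (k : R) : Gamma0 k = k ^ 3 / (8 * cosh k * sinh k * Dk k) * Gamma0_num k.
Proof. reflexivity. Qed.

(* The shift 16 k^7 cancels the Taylor coefficient -16 of N at order 7, the only negative one. *)
Definition Gamma0_num_terms : list exp_term :=
  [ET (5/128) 0 (-10); ET (3/64) 1 (-10);
   ET (1/16) 0 (-8); ET (-1/8) 1 (-8); ET (1/4) 3 (-8);
   ET (-23/128) 0 (-6); ET (1/64) 1 (-6); ET (3/8) 2 (-6); ET (1/4) 3 (-6);
   ET (-1/8) 0 (-4); ET (15/8) 1 (-4); ET 1 2 (-4); ET (5/2) 3 (-4);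
   ET (11/32) 0 (-2); ET (-1/16) 1 (-2); ET (29/8) 2 (-2); ET (29/4) 3 (-2);
   ET (-7/2) 1 0; ET (-23/2) 3 0; ET 16 7 0;
   ET (-11/32) 0 2; ET (-1/16) 1 2; ET (-29/8) 2 2; ET (29/4) 3 2;
   ET (1/8) 0 4; ET (15/8) 1 4; ET (-1) 2 4; ET (5/2) 3 4;
   ET (23/128) 0 6; ET (1/64) 1 6; ET (-3/8) 2 6; ET (1/4) 3 6;
   ET (-1/16) 0 8; ET (-1/8) 1 8; ET (1/4) 3 8;
   ET (-5/128) 0 10; ET (3/64) 1 10].

Definition Dk_terms : list exp_term :=
  [ET (1/64) 0 (-6); ET (3/32) 1 (-6);
   ET (1/2) 3 (-4);
   ET (-3/64) 0 (-2); ET (-3/32) 1 (-2); ET (3/4) 2 (-2); ET (1/2) 3 (-2);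
   ET (-1) 3 0;
   ET (3/64) 0 2; ET (-3/32) 1 2; ET (-3/4) 2 2; ET (1/2) 3 2;
   ET (1/2) 3 4;
   ET (-1/64) 0 6; ET (3/32) 1 6].

Lemma expoly_Gamma0_num (k : R) : expoly Gamma0_num_terms k = Gamma0_num k + 16 * k ^ 7.
Proof.
  unfold Gamma0_num_terms. expand_expoly.
  unfold Gamma0_num, sinh, cosh. rewrite exp_Ropp.
  field. apply Rgt_not_eq, exp_pos.
Qed.

Lemma expoly_Dk (k : R) : expoly Dk_terms k = Dk k.
Proof.
  unfold Dk_terms. expand_expoly.
  unfold Dk, sinh, cosh. rewrite exp_Ropp.
  field. apply Rgt_not_eq, exp_pos.
Qed.

Definition Gamma0_num_taylor_odd (p : nat) : R :=
  let x := INR (2 * p) in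
  2 ^ (2 * p) * (400256 + 161440 * x + 21344 * x ^ 2 + 928 * x ^ 3)
  + 4 ^ (2 * p) * (10240000 + 3600384 * x + 458752 * x ^ 2 + 20480 * x ^ 3)
  + 6 ^ (2 * p) * (734832 + 938952 * x + 349920 * x ^ 2 + 23328 * x ^ 3)
  + 8 ^ (2 * p) * (11534336 + 20840448 * x + 3145728 * x ^ 2 + 131072 * x ^ 3)
  + 10 ^ (2 * p) * (6250000 + 9375000 * x).

Definition Dk_taylor_odd (p : nat) : R :=
  let x := INR (2 * p) in
  2 ^ (2 * p) * (-12 + 77 * x + 36 * x ^ 2 + 4 * x ^ 3)
  + 4 ^ (2 * p) * (960 + 752 * x + 192 * x ^ 2 + 16 * x ^ 3)
  + 6 ^ (2 * p) * (972 + 243 * x).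

Lemma Gamma0_num_coef_low (n : nat) : (n < 9)%nat -> expoly_coef Gamma0_num_terms n = 0.
Proof.
  intro Hn. unfold Gamma0_num_terms. do 9 (destruct n as [|n]; [expand_coef; field|]). lia.
Qed.

Lemma Gamma0_num_coef_odd (p : nat) :
  expoly_coef Gamma0_num_terms (9 + 2 * p) * Rfact (9 + 2 * p) = Gamma0_num_taylor_odd p.
Proof. unfold Gamma0_num_terms, Gamma0_num_taylor_odd. expand_coef. field_Rfact p. Qed.

Lemma Gamma0_num_coef_even (p : nat) : expoly_coef Gamma0_num_terms (10 + 2 * p) = 0.
Proof. unfold Gamma0_num_terms. expand_coef. field_Rfact p. Qed.

Lemma Gamma0_num_taylor_odd_nonneg (p : nat) : 0 <= Gamma0_num_taylor_odd p.
Proof.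
  unfold Gamma0_num_taylor_odd. pose proof (pos_INR (2 * p)).
  repeat (apply Rplus_le_le_0_compat || apply Rmult_le_pos); try apply pow_le; lra.
Qed.

Lemma Gamma0_num_coef_nonneg (n : nat) : 0 <= expoly_coef Gamma0_num_terms n.
Proof.
  apply (nonneg_of_parity _ 9 Gamma0_num_coef_low); [|exact Gamma0_num_coef_even].
  intro p.
  exact (coef_nonneg_of_scaled _ _ _ (Gamma0_num_coef_odd p) (Gamma0_num_taylor_odd_nonneg p)).
Qed.

Lemma Dk_coef_low (n : nat) : (n < 5)%nat -> expoly_coef Dk_terms n = 0.
Proof.
  intro Hn. unfold Dk_terms. do 5 (destruct n as [|n]; [expand_coef; field|]). lia.
Qed.

Lemma Dk_coef_5 : expoly_coef Dk_terms 5 = 16.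
Proof. unfold Dk_terms. expand_coef. field. Qed.

Lemma Dk_coef_odd (p : nat) :
  expoly_coef Dk_terms (5 + 2 * p) * Rfact (5 + 2 * p) = Dk_taylor_odd p.
Proof. unfold Dk_terms, Dk_taylor_odd. expand_coef. field_Rfact p. Qed.

Lemma Dk_coef_even (p : nat) : expoly_coef Dk_terms (6 + 2 * p) = 0.
Proof. unfold Dk_terms. expand_coef. field_Rfact p. Qed.

Lemma Dk_taylor_odd_nonneg (p : nat) : 0 <= Dk_taylor_odd p.
Proof.
  unfold Dk_taylor_odd. set (x := INR (2 * p)).
  assert (0 <= x) by apply pos_INR.
  assert (0 <= 2 ^ (2 * p)) by (apply pow_le; lra).
  assert (2 ^ (2 * p) <= 4 ^ (2 * p)) by (apply pow_incr; lra).
  assert (0 <= 6 ^ (2 * p)) by (apply pow_le; lra).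
  assert (0 <= x ^ 2) by (apply pow_le; lra).
  assert (0 <= x ^ 3) by (apply pow_le; lra).
  nra.
Qed.

Lemma Dk_coef_nonneg (n : nat) : 0 <= expoly_coef Dk_terms n.
Proof.
  apply (nonneg_of_parity _ 5 Dk_coef_low); [|exact Dk_coef_even].
  intro p.
  exact (coef_nonneg_of_scaled _ _ _ (Dk_coef_odd p) (Dk_taylor_odd_nonneg p)).
Qed.

Lemma Dk_pos (k : R) : 0 < k -> 0 < Dk k.
Proof.
  intro Hk. rewrite <- expoly_Dk.
  assert (Hsum : sum_f_R0 (fun n => expoly_coef Dk_terms n * k ^ n) 5 = 16 * k ^ 5).
  { cbn [sum_f_R0]. rewrite Dk_coef_5, !Dk_coef_low by lia. ring. }
  assert (0 < k ^ 5) by (apply pow_lt; lra).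
  enough (16 * k ^ 5 <= expoly Dk_terms k) by lra.
  rewrite <- Hsum, <- sum_n_Reals. apply sum_n_le_is_series.
  - intro n. apply Rmult_le_pos; [apply Dk_coef_nonneg|apply pow_le; lra].
  - exact (proj1 (is_pseries_iff_is_series _ _ _) (is_pseries_expoly Dk_terms k)).
Qed.

Definition Gamma0_num_ratio (k : R) : R := (Gamma0_num k + 16 * k ^ 7) / k ^ 7.

Lemma Gamma0_num_eq_ratio (k : R) : 0 < k -> Gamma0_num k = k ^ 7 * (Gamma0_num_ratio k - 16).
Proof. intro Hk. unfold Gamma0_num_ratio. field. lra. Qed.

Lemma Gamma0_num_ratio_le (x y : R) : 0 < x <= y -> Gamma0_num_ratio x <= Gamma0_num_ratio y.
Proof.
  intro Hxy. unfold Gamma0_num_ratio. rewrite <- !expoly_Gamma0_num.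
  apply (is_pseries_div_pow_le (expoly_coef Gamma0_num_terms));
    [| |intro z; apply is_pseries_expoly|exact Hxy].
  - exact Gamma0_num_coef_nonneg.
  - intros n Hn. apply Gamma0_num_coef_low. lia.
Qed.

Definition kappa_lo : R := 380337 / 1000000.
Definition kappa_hi : R := 380338 / 1000000.

(* N(kappa_lo) is about -6e-8 while its exponential terms are of order one, hence the width
   1e-12 of this enclosure. *)
Lemma exp_neg_kappa_lo_bounds :
  136726197349 / 200000000000 <= exp (- kappa_lo) <= 341815493373 / 500000000000.
Proof.
  destruct (exp_neg_alternating_bounds kappa_lo 6) as [Hlo Hhi]; [unfold kappa_lo; lra|].
  revert Hlo Hhi. unfold tg_alt, kappa_lo. cbn [sum_f_R0 pow Rfact INR Nat.mul Nat.add].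
  intros. split; lra.
Qed.

Lemma Gamma0_num_kappa_lo_neg : Gamma0_num kappa_lo < 0.
Proof.
  destruct exp_neg_kappa_lo_bounds as [Hwl Hwh].
  set (w := exp (- kappa_lo)) in *.
  assert (Hz : exp kappa_lo = / w) by (unfold w; rewrite exp_Ropp, Rinv_inv; reflexivity).
  assert (Hpow : forall j, (136726197349 / 200000000000) ^ j <= w ^ j
                           <= (341815493373 / 500000000000) ^ j)
    by (intro j; split; apply pow_incr; lra).
  assert (Hinv : forall j, / (341815493373 / 500000000000) ^ j <= / w ^ j
                           <= / (136726197349 / 200000000000) ^ j).
  { intro j. destruct (Hpow j).
    split; apply Rinv_le_contravar; try apply pow_lt; lra. }
  enough (Hexp : expoly Gamma0_num_terms kappa_lo < 16 * kappa_lo ^ 7)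
    by (rewrite expoly_Gamma0_num in Hexp; lra).
  (* Each exponential becomes w^j or / w^j, and lra picks the bound matching the sign of its
     coefficient. *)
  unfold Gamma0_num_terms. expand_expoly. rewrite Hz, !pow_inv, !Rinv_inv.
  pose proof (Hpow 2%nat). pose proof (Hpow 4%nat). pose proof (Hpow 6%nat).
  pose proof (Hpow 8%nat). pose proof (Hpow 10%nat).
  pose proof (Hinv 2%nat). pose proof (Hinv 4%nat). pose proof (Hinv 6%nat).
  pose proof (Hinv 8%nat). pose proof (Hinv 10%nat).
  unfold kappa_lo. lra.
Qed.

Lemma Gamma0_num_taylor_kappa_hi :
  16 * kappa_hi ^ 7 < sum_f_R0 (fun n => expoly_coef Gamma0_num_terms n * kappa_hi ^ n) 19.
Proof.
  unfold kappa_hi, Gamma0_num_terms, expoly_coef, monexp_coef.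
  cbn [sum_f_R0 fold_right Nat.ltb Nat.leb Nat.sub pow Rfact INR]. lra.
Qed.

Lemma Gamma0_num_neg (k : R) : 0 < k <= kappa_lo -> Gamma0_num k < 0.
Proof.
  intros [Hk Hkl].
  assert (Hlo : 0 < kappa_lo) by (unfold kappa_lo; lra).
  assert (Hratio_lo : Gamma0_num_ratio kappa_lo < 16).
  { pose proof Gamma0_num_kappa_lo_neg as Hneg.
    rewrite Gamma0_num_eq_ratio in Hneg by exact Hlo.
    assert (0 < kappa_lo ^ 7) by (apply pow_lt; lra). nra. }
  pose proof (Gamma0_num_ratio_le k kappa_lo (conj Hk Hkl)).
  assert (0 < k ^ 7) by (apply pow_lt; lra).
  rewrite Gamma0_num_eq_ratio by exact Hk. nra.
Qed.

Lemma Gamma0_num_pos (k : R) : kappa_hi <= k -> 0 < Gamma0_num k.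
Proof.
  intro Hkh.
  assert (Hhi : 0 < kappa_hi) by (unfold kappa_hi; lra).
  assert (Hratio_hi : 16 < Gamma0_num_ratio kappa_hi).
  { assert (Hsum : sum_f_R0 (fun n => expoly_coef Gamma0_num_terms n * kappa_hi ^ n) 19
                   <= Gamma0_num kappa_hi + 16 * kappa_hi ^ 7).
    { rewrite <- expoly_Gamma0_num, <- sum_n_Reals. apply sum_n_le_is_series.
      - intro n. apply Rmult_le_pos; [apply Gamma0_num_coef_nonneg|apply pow_le; lra].
      - exact (proj1 (is_pseries_iff_is_series _ _ _)
                 (is_pseries_expoly Gamma0_num_terms kappa_hi)). }
    pose proof Gamma0_num_taylor_kappa_hi as Htaylor.
    assert (Hpos : 0 < Gamma0_num kappa_hi) by lra.
    rewrite Gamma0_num_eq_ratio in Hpos by exact Hhi.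
    assert (0 < kappa_hi ^ 7) by (apply pow_lt; lra). nra. }
  pose proof (Gamma0_num_ratio_le kappa_hi k (conj Hhi Hkh)).
  assert (0 < k ^ 7) by (apply pow_lt; lra).
  rewrite Gamma0_num_eq_ratio by lra. nra.
Qed.

Theorem lemma4p11 (k : R) :
  0 < k -> ~ (380337/1000000 < k < 380338/1000000) -> Gamma0 k <> 0.
Proof.
  intros Hk Hout.
  assert (Hnum : Gamma0_num k <> 0).
  { destruct (Rle_or_lt k kappa_lo); [apply Rlt_not_eq, Gamma0_num_neg; lra|].
    destruct (Rle_or_lt kappa_hi k); [apply Rgt_not_eq, Gamma0_num_pos; lra|].
    exfalso. apply Hout. unfold kappa_lo, kappa_hi in *. lra. }
  assert (0 < sinh k) by (rewrite <- sinh_0; apply sinh_lt; exact Hk).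
  assert (0 < cosh k) by (unfold cosh; pose proof (exp_pos k); pose proof (exp_pos (- k)); lra).
  pose proof (Dk_pos k Hk).
  rewrite Gamma0_factor. apply Rmult_integral_contrapositive_currified; [|exact Hnum].
  apply Rgt_not_eq, Rdiv_lt_0_compat; [apply pow_lt; exact Hk|].
  apply Rmult_lt_0_compat; [apply Rmult_lt_0_compat; [apply Rmult_lt_0_compat|]|]; lra.
Qed.
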